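(* Let $\mathcal{A}$ be a central and essential arrangement in $\mathbb{Q}^l$ as in the context, with $\lcm$-period $\rho_0$, and let $\sigma$ be a term ordering. If a prime $p$ is not $(\sigma,l)$-lucky for $\mathcal{A}$, then $p$ divides $\rho_0$.
   Context: $\mathcal{A}=\{H_1,\dots,H_n\}$: $n$ distinct linear hyperplanes in $\mathbb{Q}^l$ with $\bigcap H_i=\{0\}$, $H_i=\{\alpha_i=0\}$, $\alpha_i=\sum_{k=1}^lc_{ki}x_k$ with $c_{ki}\in\mathbb{Z}$ not all divisible by any prime. Let $C=(c_{ki})\in\mathrm{Mat}_{l\times n}(\mathbb{Z})$ with columns $c_1,\dots,c_n$; for nonempty $J=\{i_1<\dots<i_k\}\subseteq[n]$, $C_J=(c_{i_1},\dots,c_{i_k})$, with Smith normal form having nonzero diagonal entries $e_{J,1}\mid\dots\mid e_{J,r}$ (positive), $r=\mathrm{rk}(C_J)$; $e(J)=e_{J,r}$ and $\rho_0=\lcm\{e(J): 1\le|J|\le l\}$. Gröbner notions: for a term ordering $\sigma$ and nonzero $f\in\mathbb{Z}[x_1,\dots,x_l]$, $\mathrm{LM}_\sigma(f)$ is the $\sigma$-leading term times its coefficient $\mathrm{LC}_\sigma(f)$. A minimal strong $\sigma$-Gröbner basis of an ideal $I\subseteq\mathbb{Z}[x_1,\dots,x_l]$ is a finite generating set $G$ of nonzero elements of $I$ such that every nonzero $f\in I$ has $\mathrm{LM}_\sigma(f)$ divisible by some $\mathrm{LM}_\sigma(g)$, $g\in G$, and no $\mathrm{LM}_\sigma(g)$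 divides $\mathrm{LM}_\sigma(g')$ for distinct $g,g'$; its set of leading coefficients is independent of the choice. $p$ is $\sigma$-lucky for $I$ if it divides none of them; $p$ is $(\sigma,l)$-lucky for $\mathcal{A}$ if it is $\sigma$-lucky for every ideal $\langle\alpha_{i_1},\dots,\alpha_{i_l}\rangle\subseteq\mathbb{Z}[x_1,\dots,x_l]$ with $i_1<\dots<i_l$ and $\operatorname{codim}(H_{i_1}\cap\dots\cap H_{i_l})=l$. *)

From HB Require Import structures.
From mathcomp Require Import all_boot all_order all_algebra.
From mathcomp Require Import mpoly.
Set Implicit Arguments. Unset Strict Implicit. Unset Printing Implicit Defensive.
Import Order.TTheory GRing.Theory Num.Theory.
Local Open Scope ring_scope.

Section Arrangement.
Variables (l n : nat).

Definition hform (C : 'M[int]_(l, n)) (i : 'I_n) (x : 'rV[rat]_l) : rat :=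
  \sum_(k < l) (C k i)%:~R * x 0 k.

(* the column submatrix C_J, columns in increasing order of index *)
Definition colsubJ (C : 'M[int]_(l, n)) (J : {set 'I_n}) : 'M[int]_(l, #|J|) :=
  colsub (fun k : 'I_#|J| => enum_val k) C.

End Arrangement.

Definition snf_diag m k (M : 'M[int]_(m, k)) : seq int :=
  match int_Smith_normal_form M with
  | existT2 _ _ (existT2 _ _ d) => sval d
  end.

(* e(M) : the last (largest) nonzero diagonal entry of the Smith normal form,
   made positive *)
Definition snf_e m k (M : 'M[int]_(m, k)) : nat :=
  absz (last 1%R [seq x <- snf_diag M | x != 0%R]).

Definition rho0 l n (C : 'M[int]_(l, n)) : nat :=
  \big[lcmn/1%N]_(J : {set 'I_n} | (0 < #|J| <= l)%N) snf_e (colsubJ C J).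

Section Groebner.
Variable l : nat.
Local Notation P := {mpoly int[l]}.

Definition alpha n (C : 'M[int]_(l, n)) (i : 'I_n) : P :=
  \sum_(k < l) (C k i)%:MP * 'X_k.

Definition term_order (le : rel 'X_{1..l}) : Prop :=
  [/\ reflexive le, antisymmetric le, transitive le & total le] /\
  (forall m, le 0%MM m) /\
  (forall m1 m2 m3, le m1 m2 -> le (m1 + m3)%MM (m2 + m3)%MM).

Definition lexp (le : rel 'X_{1..l}) (f : P) : 'X_{1..l} :=
  foldr (fun m acc => if le acc m then m else acc) 0%MM (msupp f).

Definition LC (le : rel 'X_{1..l}) (f : P) : int := f@_(lexp le f).
Definition LM (le : rel 'X_{1..l}) (f : P) : P := LC le f *: 'X_[lexp le f].

Definition mdvd (a b : P) : Prop := exists q : P, b = q * a.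

Definition in_ideal (gs : seq P) (f : P) : Prop :=
  exists cs : seq P, f = \sum_(i < size gs) cs`_i * gs`_i.

Definition min_strong_GB (le : rel 'X_{1..l}) (gens G : seq P) : Prop :=
  [/\ uniq G,
      (forall g, g \in G -> g != 0 /\ in_ideal gens g),
      (forall f, in_ideal G f <-> in_ideal gens f),
      (forall f, in_ideal gens f -> f != 0 ->
          exists2 g, g \in G & mdvd (LM le g) (LM le f)) &
      (forall g g', g \in G -> g' \in G -> g != g' ->
          ~ mdvd (LM le g) (LM le g'))].

Definition lucky (le : rel 'X_{1..l}) (p : nat) (gens : seq P) : Prop :=
  forall G, min_strong_GB le gens G ->
    forall g, g \in G -> ~~ (p%:Z %| LC le g)%Z.

Definition lucky_arr n (C : 'M[int]_(l, n)) (le : rel 'X_{1..l}) (p : nat) : Prop :=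
  forall J : {set 'I_n}, #|J| = l ->
    (* codim (H_{i_1} cap ... cap H_{i_l}) = l, i.e. the intersection is {0} *)
    (forall x : 'rV[rat]_l, (forall i, i \in J -> hform C i x = 0) -> x = 0) ->
    lucky le p [seq alpha C i | i <- enum J].

End Groebner.

From HB Require Import structures.
From mathcomp Require Import all_boot all_order all_algebra.
From mathcomp Require Import mpoly.
Import Order.TTheory GRing.Theory Num.Theory.
Set Implicit Arguments. Unset Strict Implicit. Unset Printing Implicit Defensive.
Local Open Scope ring_scope.

(* Let J be an l-subset with C_J nonsingular and D = det C_J. Multiplying the
   forms alpha_j (j in J) by the adjugate of C_J shows that D x^m lies in their
   ideal for every nonconstant monomial x^m. If g is in a minimal strong
   Groebner basis with leading term c x^m, a Bezout combination of g and D x^m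
   has leading term gcd(c, D) x^m; minimality forces c | gcd(c, D), so c | D.
   Finally a prime dividing D divides some invariant factor of C_J, hence the
   largest one e(J), hence rho_0. *)

Section LeadingExponent.
Variables (l : nat) (le : rel 'X_{1..l}).
Hypothesis le_order : term_order le.
Local Notation P := {mpoly int[l]}.

Lemma foldr_max_spec (s : seq 'X_{1..l}) :
  let M := foldr (fun m acc => if le acc m then m else acc) 0%MM s in
  (s != [::] -> M \in s) /\ {in s, forall m, le m M}.
Proof.
have [[le_refl _ le_trans le_total] [le0 _]] := le_order.
elim: s => [|x s [IHin IHmax]] //=; set M := foldr _ _ s in IHin IHmax *; split.
- move=> _; case: ifP => [_|le_x]; first exact: mem_head.
  have s_neq0 : s != [::] by apply: contraFneq le_x => s0; rewrite /M s0 le0.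
  by rewrite in_cons IHin ?orbT.
- move=> y; rewrite in_cons => /predU1P [->|ys]; case: ifP => // le_x.
  + by have := le_total x M; rewrite le_x orbF.
  + exact: le_trans (IHmax y ys) le_x.
  + exact: IHmax.
Qed.

Lemma lexp_msupp (f : P) : f != 0 -> lexp le f \in msupp f.
Proof. by rewrite -msupp_eq0; have [] := foldr_max_spec (msupp f). Qed.

Lemma le_lexp (f : P) m : m \in msupp f -> le m (lexp le f).
Proof. by have [_] := foldr_max_spec (msupp f); apply. Qed.

Lemma lexpE (f : P) m :
  f@_m != 0 -> {in msupp f, forall m', le m' m} -> lexp le f = m.
Proof.
have [[_ le_anti _ _] _] := le_order.
rewrite -mcoeff_msupp => fm le_m; have f_neq0 : f != 0.
  by apply: contraTneq fm => ->; rewrite msupp0.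
by apply: le_anti; rewrite le_m ?lexp_msupp ?le_lexp.
Qed.

Lemma LC_neq0 (f : P) : f != 0 -> LC le f != 0.
Proof. by move/lexp_msupp; rewrite mcoeff_msupp. Qed.

Lemma lexp_neq0 (f : P) : f != 0 -> f@_0%MM = 0 -> lexp le f != 0%MM.
Proof. by move=> /LC_neq0 + f0; apply: contraNneq => lexp0; rewrite /LC lexp0 f0. Qed.

End LeadingExponent.

Section Ideal.
Variable l : nat.
Local Notation P := {mpoly int[l]}.

Lemma mdvd_trans (a b c : P) : mdvd a b -> mdvd b c -> mdvd a c.
Proof. by move=> [q ->] [q' ->]; exists (q' * q); rewrite mulrA. Qed.

Lemma mdvd_scaleX (a b : int) m : mdvd (a *: 'X_[m]) (b *: 'X_[m] : P) <-> (a %| b)%Z.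
Proof.
split=> [[q /(congr1 (mcoeff m))]|/dvdzP [q ->]]; last first.
  by exists q%:MP; rewrite mul_mpolyC scalerA.
rewrite -scalerAr !mcoeffZ mcoeffX eqxx mulr1.
have := mcoeffMX q m 0%MM; rewrite addm0 => -> ->.
by apply/dvdzP; exists q@_0%MM; rewrite mulrC.
Qed.

Lemma in_ideal_sum k (f c : 'I_k -> P) :
  in_ideal [seq f j | j <- enum 'I_k] (\sum_j c j * f j).
Proof.
exists [seq c j | j <- enum 'I_k]; rewrite size_map size_enum_ord.
by apply: eq_bigr => j _; rewrite !(nth_map j) -?enumT ?size_enum_ord // nth_ord_enum.
Qed.

Variable gs : seq P.

Lemma in_idealP f :
  in_ideal gs f <-> exists c : 'I_(size gs) -> P, f = \sum_i c i * gs`_i.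
Proof.
split=> [[cs ->]|[c ->]]; first by exists (fun i => cs`_i).
exists [seq c j | j <- enum 'I_(size gs)]; apply: eq_bigr => i _.
by rewrite (nth_map i) ?size_enum_ord // nth_ord_enum.
Qed.

Lemma in_idealD f g : in_ideal gs f -> in_ideal gs g -> in_ideal gs (f + g).
Proof.
move=> /in_idealP [c ->] /in_idealP [d ->]; apply/in_idealP.
exists (fun i => c i + d i); rewrite -big_split.
by apply: eq_bigr => i _; rewrite mulrDl.
Qed.

Lemma in_idealM q f : in_ideal gs f -> in_ideal gs (q * f).
Proof.
move=> /in_idealP [c ->]; apply/in_idealP.
by exists (fun i => q * c i); rewrite mulr_sumr; apply: eq_bigr => i _; rewrite mulrA.
Qed.

Lemma in_ideal_mcoeff0 f :
  {in gs, forall g, g@_0%MM = 0} -> in_ideal gs f -> f@_0%MM = 0.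
Proof.
move=> gs0 /in_idealP [c ->].
rewrite (rmorph_sum (mcoeff 0%MM : P -> int)) big1 // => i _.
by rewrite (rmorphM (mcoeff 0%MM : P -> int)) /= [gs`_i@_0]gs0 ?mulr0 ?mem_nth.
Qed.

End Ideal.

Section LinearForms.
Variable l : nat.
Local Notation P := {mpoly int[l]}.

Lemma alpha_mcoeff0 k (M : 'M[int]_(l, k)) j : (alpha M j)@_0%MM = 0.
Proof.
rewrite /alpha raddf_sum big1 // => i _.
by rewrite /= mcoeffCM mcoeffX mnm1_eq0 mulr0.
Qed.

Lemma in_ideal_alpha_scaleX k (M : 'M[int]_(l, k)) (B : 'M[int]_(k, l)) D m :
  M *m B = D%:M -> m != 0%MM ->
  in_ideal [seq alpha M j | j <- enum 'I_k] (D *: 'X_[m] : P).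
Proof.
move=> MB m_neq0.
have DX i : D *: 'X_i = \sum_j (B j i)%:MP * alpha M j.
  transitivity (\sum_i' ((M *m B) i' i)%:MP * 'X_i').
    rewrite MB (bigD1 i) //= big1 => [|i' /negbTE i'_neq]; last first.
      by rewrite mxE i'_neq mulr0n mpolyC0 mul0r.
    by rewrite mxE eqxx mulr1n addr0 mul_mpolyC.
  symmetry; under eq_bigr do rewrite /alpha mulr_sumr.
  rewrite exchange_big; apply: eq_bigr => i' _ /=.
  rewrite mxE rmorph_sum mulr_suml /=; apply: eq_bigr => j _.
  by rewrite mulrA -mpolyCM [B j i * _]mulrC.
have [i m_i] : exists i, (0 < m i)%N.
  apply/existsP; apply: contraNT m_neq0; rewrite negb_exists => /forallP m0.
  by apply/eqP/mnmP => i; rewrite mnm0E; apply/eqP; rewrite eqn0Ngt m0.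
have Um : (U_(i) <= m)%MM by apply/mnm_lepP => i'; rewrite mnm1E; case: eqP => [<-|].
rewrite -(submK Um) mpolyXD scalerAr DX; apply: in_idealM; exact: in_ideal_sum.
Qed.

End LinearForms.

Section MinimalStrongBasis.
Variables (l : nat) (le : rel 'X_{1..l}).
Hypothesis le_order : term_order le.
Local Notation P := {mpoly int[l]}.

Lemma min_strong_GB_LC_dvd (gens G : seq P) g (D : int) :
  min_strong_GB le gens G -> g \in G ->
  in_ideal gens (D *: 'X_[lexp le g]) -> (LC le g %| D)%Z.
Proof.
move=> [_ G_ideal _ G_lead G_min] gG DX.
have [g_neq0 gI] := G_ideal g gG.
set m := lexp le g in DX *; set c := LC le g.
have [u [v uv]] := Bezoutz c D.
(* [f] has leading term [gcd(c, D) X^m]; minimality of [G] forces it to be a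
   multiple of [LM g] itself. *)
pose f := u *: g + v *: (D *: 'X_[m]).
have fI : in_ideal gens f by apply: in_idealD; rewrite -mul_mpolyC; apply: in_idealM.
have fm : f@_m = gcdz c D by rewrite mcoeffD !mcoeffZ mcoeffX eqxx mulr1.
have fm_neq0 : f@_m != 0 by rewrite fm gcdz_eq0 negb_and LC_neq0.
have f_neq0 : f != 0 by apply: contraNneq fm_neq0 => ->; rewrite mcoeff0.
have lexp_f : lexp le f = m.
  apply: lexpE => //.
  move=> m' m'f; have [/(le_lexp le_order) //|] := boolP (m' \in msupp g).
  rewrite mcoeff_msupp negbK => /eqP g0.
  move: m'f; rewrite mcoeff_msupp mcoeffD !mcoeffZ g0 mulr0 add0r mcoeffX.
  have [-> _|_] := eqVneq m m'; last by rewrite !mulr0 eqxx.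
  by have [[le_refl _ _ _] _] := le_order; apply: le_refl.
have LM_f : LM le f = gcdz c D *: 'X_[m] by rewrite /LM /LC lexp_f fm.
have [g' g'G dvd_f] := G_lead f fI f_neq0.
have g'E : g' = g.
  have [//|g'_neq] := eqVneq g' g; case: (G_min _ _ g'G gG g'_neq).
  by apply: mdvd_trans dvd_f _; rewrite LM_f; apply/mdvd_scaleX/dvdz_gcdl.
move: dvd_f; rewrite g'E LM_f => /mdvd_scaleX /dvdz_trans; apply.
exact: dvdz_gcdr.
Qed.

Lemma LC_dvd_det (M : 'M[int]_l) (G : seq P) g :
  min_strong_GB le [seq alpha M j | j <- enum 'I_l] G -> g \in G ->
  (LC le g %| \det M)%Z.
Proof.
move=> GB gG; have [_ G_ideal _ _ _] := GB; have [g_neq0 gI] := G_ideal g gG.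
apply: min_strong_GB_LC_dvd GB gG _; apply: in_ideal_alpha_scaleX (mul_mx_adj M) _.
apply: (lexp_neq0 le_order g_neq0); apply: in_ideal_mcoeff0 gI.
by move=> _ /mapP [j _ ->]; apply: alpha_mcoeff0.
Qed.

End MinimalStrongBasis.

Lemma dvdz_last_sorted (s : seq int) x : sorted dvdz s -> x \in s -> (x %| last 1 s)%Z.
Proof.
elim: s => [|a s IHs] //= s_sorted; rewrite in_cons => /predU1P [->|xs].
  have := mem_last a s; rewrite in_cons => /predU1P [->|]; first exact: dvdzz.
  by have /allP := order_path_min dvdz_trans s_sorted; apply.
case: s IHs s_sorted xs => [|b s] IHs s_sorted xs //=.
exact: IHs (path_sorted s_sorted) xs.
Qed.

Lemma prime_dvd_snf_e l (M : 'M[int]_l) p :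
  prime p -> \det M != 0 -> (p%:Z %| \det M)%Z -> (p %| snf_e M)%N.
Proof.
move=> p_prime det_neq0 p_det; rewrite /snf_e /snf_diag.
case: int_Smith_normal_form => L L_unit [R R_unit [d d_sorted ME]] /=.
have p_ndvd_unit (A : 'M[int]_l) : A \in unitmx -> ~~ (p %| `|\det A|)%N.
  rewrite unitmxE => /unitrP [y [yA _]]; apply/negP => /(dvdn_mull `|y|).
  by rewrite -abszM yA /= Euclid_dvd1.
have detE : \det M = \det L * \prod_(i < l) d`_i * \det R.
  rewrite ME !det_mulmx; congr (_ * _ * _).
  transitivity (\det (diag_mx (\row_(i < l) d`_i))).
    by congr (\det _); apply/matrixP => i j; rewrite !mxE.
  by rewrite det_diag; apply: eq_bigr => i _; rewrite mxE.
move: p_det det_neq0; rewrite detE dvdzE !abszM !Euclid_dvdM //.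
rewrite (negbTE (p_ndvd_unit _ L_unit)) (negbTE (p_ndvd_unit _ R_unit)) orbF /=.
rewrite (big_morph (fun x : int => `|x|%N) abszM (erefl : `|1%R|%N = 1%N)).
rewrite Euclid_dvd_prod // big_has_cond => /hasP [i _ /= p_di] det_neq0.
have di_neq0 : d`_i != 0.
  by apply: contraNneq det_neq0 => di0; rewrite (bigD1 i) //= di0 mul0r mulr0 mul0r.
have di_in : d`_i \in [seq x <- d | x != 0].
  rewrite mem_filter di_neq0 mem_nth // ltnNge; apply: contra di_neq0.
  by move=> /(nth_default 0) ->.
have := dvdz_last_sorted (sorted_filter dvdz_trans _ d_sorted) di_in.
by rewrite dvdzE; apply: dvdn_trans p_di.
Qed.

Lemma prime_dvd_det_gt0 l (M : 'M[int]_l) p :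
  prime p -> (p%:Z %| \det M)%Z -> (0 < l)%N.
Proof. by case: l M => // M p_prime; rewrite det_mx00 dvdzE /= Euclid_dvd1. Qed.

Lemma det_neq0_hform l (M : 'M[int]_l) :
  (forall x, (forall j, hform M j x = 0) -> x = 0) -> \det M != 0.
Proof.
move=> M_inj; have : \det (map_mx intr M : 'M[rat]_l) != 0.
  apply/negP => /det0P [x x_neq0 xM]; move/eqP: x_neq0; apply; apply: M_inj => j.
  have := congr1 (fun A : 'rV[rat]_l => A 0 j) xM; rewrite !mxE => <-.
  by apply: eq_bigr => k _; rewrite mxE mulrC.
by rewrite det_map_mx; apply: contraNneq => ->; rewrite rmorph0.
Qed.

Section ColumnSubmatrix.
Variables (l n : nat) (C : 'M[int]_(l, n)) (J : {set 'I_n}).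

Lemma hform_colsubJ j x : hform (colsubJ C J) j x = hform C (enum_val j) x.
Proof. by apply: eq_bigr => k _; rewrite mxE. Qed.

Lemma map_alpha_colsubJ :
  [seq alpha C i | i <- enum J] = [seq alpha (colsubJ C J) j | j <- enum 'I_#|J|].
Proof.
rewrite -[in LHS](map_tnth_enum (enum_tuple J)) -map_comp; apply: eq_map => j /=.
rewrite (tnth_nth (enum_default j)); apply: eq_bigr => k _; by rewrite mxE.
Qed.

Lemma snf_e_colsubJ_dvd_rho0 : (0 < #|J| <= l)%N -> (snf_e (colsubJ C J) %| rho0 C)%N.
Proof. by move=> J_card; rewrite /rho0 (bigD1 J) //= dvdn_lcml. Qed.

End ColumnSubmatrix.

Theorem proposition7p5 (l n : nat) (C : 'M[int]_(l, n))
  (le : rel 'X_{1..l}) (p : nat) :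
  (* each alpha_i has coprime integer coefficients *)
  (forall (i : 'I_n) (q : nat), prime q -> exists k : 'I_l, ~~ (q%:Z %| C k i)%Z) ->
  (* the hyperplanes H_i are pairwise distinct *)
  (forall i j : 'I_n, i != j ->
     ~ (forall x : 'rV[rat]_l, (hform C i x == 0) = (hform C j x == 0))) ->
  (* the arrangement is essential: the intersection of all H_i is {0} *)
  (forall x : 'rV[rat]_l, (forall i, hform C i x = 0) -> x = 0) ->
  term_order le ->
  prime p ->
  ~ lucky_arr C le p ->
  (p %| rho0 C)%N.
Proof.
move=> _ _ _ le_order p_prime; apply: contra_notT => p_ndvd J J_card J_codim G GB g gG.
apply: contra p_ndvd => p_LC.
suff /andP [J_gt0 p_snf] : (0 < #|J|)%N && (p %| snf_e (colsubJ C J))%N.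
  by rewrite (dvdn_trans p_snf) // snf_e_colsubJ_dvd_rho0 // J_gt0 J_card leqnn.
rewrite map_alpha_colsubJ in GB.
have {}J_codim x : (forall j, hform (colsubJ C J) j x = 0) -> x = 0.
  move=> x0; apply: J_codim => i iJ.
  by rewrite -(enum_rankK_in iJ iJ) -hform_colsubJ.
move: (colsubJ C J) GB J_codim; rewrite J_card => M GB M_codim.
have p_det : (p%:Z %| \det M)%Z := dvdz_trans p_LC (LC_dvd_det le_order GB gG).
apply/andP; split; first exact: prime_dvd_det_gt0 p_prime p_det.
exact: prime_dvd_snf_e p_prime (det_neq0_hform M_codim) p_det.
Qed.
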